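(* Let $c\in\mathbb{F}_4$ satisfy $c^2+c+1=0$ and let $L(x)=x^4+cx$. Then $L$ is a bijection of $\mathbb{F}_{4^n}$ if and only if $3\nmid n$. Consequently, the function $F(x)=x^{12}+cx^3=L(x^3)$ is APN on $\mathbb{F}_{4^n}$ for every positive integer $n$ not divisible by $3$.
   Context: A function $f:K\to K$ on a finite field $K$ of characteristic $2$ is almost perfect nonlinear (APN) on $K$ if for all $a,b\in K$ with $a\ne0$ the equation $f(x+a)+f(x)=b$ has at most $2$ solutions $x\in K$. *)

From HB Require Import structures.
From mathcomp Require Import all_boot all_order all_algebra all_field.
Set Implicit Arguments. Unset Strict Implicit. Unset Printing Implicit Defensive.
Import GRing.Theory.
Local Open Scope ring_scope.

Definition APN (K : finFieldType) (f : K -> K) : Prop :=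
  forall a b : K, a != 0 -> leq #|[set x : K | f (x + a) + f x == b]| 2.

From HB Require Import structures.
From mathcomp Require Import all_boot all_order all_algebra all_field.
From mathcomp Require Import cyclic ring.
Set Implicit Arguments.
Unset Strict Implicit.
Unset Printing Implicit Defensive.
Import GRing.Theory.
Local Open Scope ring_scope.

(* Let K be a field with 4^n elements and c a root of X^2 + X + 1, so that c
   is a primitive cube root of unity (K has characteristic 2).
   1. In characteristic 2 the map L x = x^4 + c x is additive, so it is a
      bijection iff its kernel is trivial; a nonzero kernel element is exactly
      a w <> 0 with w^3 = c.
   2. If w^3 = c with w <> 0, then iterating w^4 = c w gives w^(4^k) = c^k w,
      and w^(4^n) = w forces c^n = 1, i.e. 3 | n.  Conversely, if 3 | n then
      9 divides #|K| - 1 = 4^n - 1; writing #|K| - 1 = 3m, c^m = 1 because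
      3 | m, so c is a cube in the cyclic group K^*.
   3. For APN-ness we use the "fibre" criterion: f is APN as soon as
      f(x+a) + f(x) = f(y+a) + f(y) with a <> 0 forces x in {y, y + a}.  The
      cube map satisfies it in characteristic 2, and the criterion is
      preserved by post-composition with an injective additive map; since
      F x = L (x^3), F is APN whenever L is a bijection. *)

Definition pairwise_fibres (K : fieldType) (f : K -> K) : Prop :=
  forall a x y : K, a != 0 ->
    f (x + a) + f x = f (y + a) + f y -> x = y \/ x = y + a.

(* The fibre criterion implies APN: a nonempty solution set of
   f (x + a) + f x = b lies in {y, y + a} for any of its elements y. *)
Lemma pairwise_fibres_APN (K : finFieldType) (f : K -> K) :
  pairwise_fibres f -> APN f.
Proof.
move=> fibres a b a0; set S := [set x | _].
have [->|[y Sy]] := set_0Vmem S; first by rewrite cards0.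
have sub_pair : S \subset [set y; y + a].
  apply/subsetP => x; rewrite !inE => /eqP fx.
  move: Sy; rewrite inE => /eqP fy.
  have [|->|->] := fibres a x y a0; first by rewrite fx fy.
    by rewrite eqxx.
  by rewrite eqxx orbT.
by rewrite (leq_trans (subset_leq_card sub_pair)) // cards2; case: (_ != _).
Qed.

(* Post-composing with an injective additive map preserves the criterion,
   because it commutes with taking derivatives. *)
Lemma pairwise_fibres_comp (K : fieldType) (L g F : K -> K) :
  (forall x y, L (x + y) = L x + L y) -> injective L ->
  (forall x, F x = L (g x)) -> pairwise_fibres g -> pairwise_fibres F.
Proof.
move=> L_add L_inj FE g_fibres a x y a0; rewrite !FE -!L_add => /L_inj.
exact: g_fibres.
Qed.

Lemma cube_root_unity (K : fieldType) (c : K) :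
  3%:R != 0 :> K -> c ^+ 2 + c + 1 = 0 -> 3.-primitive_root c.
Proof.
move=> three_neq0 hc.
have c3 : c ^+ 3 = 1.
  apply/eqP; rewrite -subr_eq0.
  have -> : c ^+ 3 - 1 = (c - 1) * (c ^+ 2 + c + 1) by ring.
  by rewrite hc mulr0.
have [m prim_m m3] := prim_order_exists (isT : (0 < 3)%N) c3.
have c_neq1 : c != 1.
  apply: contra_neq three_neq0 => c1.
  by rewrite -hc c1 expr1n; ring.
move: prim_m m3 (dvdn_leq (isT : (0 < 3)%N) m3); case: m => [|[|[|[|m]]]] //.
by move=> /prim_order_dvd/(_ 1%N); rewrite expr1 (negbTE c_neq1).
Qed.

Lemma finField_prim_root (K : finFieldType) :
  exists z : K, (#|K|.-1).-primitive_root z.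
Proof.
set N := #|K|.-1.
have KN : #|K| = N.+1 by rewrite /N prednK // (leq_trans _ (finNzRing_gt1 K)).
have N_gt0 : (0 < N)%N by rewrite -ltnS -KN finNzRing_gt1.
have unit_root (x : K) : x != 0 -> x ^+ N = 1.
  by move=> x0; apply: (mulIf x0); rewrite mul1r -exprSr -KN expf_card.
have : has N.-primitive_root (enum (predC1 (0 : K))).
  apply: has_prim_root => //; last by rewrite -cardE cardC1.
    apply/allP => x; rewrite mem_enum /= => x0.
    by rewrite unity_rootE unit_root.
  exact: enum_uniq.
by case/hasP => z _ prim_z; exists z.
Qed.

(* In a finite field with #|K| - 1 = d * m, every y with y^m = 1 is a d-th
   power: y is an (i m)-th-root-of-one power z^i of a generator z, so d | i. *)
Lemma finField_power_of_unit_root (K : finFieldType) (d m : nat) (y : K) :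
  (d * m)%N = #|K|.-1 -> y ^+ m = 1 -> exists x : K, x ^+ d = y.
Proof.
move=> dm ym; have [z prim_z] := finField_prim_root K.
have m_gt0 : (0 < m)%N.
  by move: (prim_order_gt0 prim_z); rewrite -dm muln_gt0 => /andP[].
have yN : y ^+ #|K|.-1 = 1 by rewrite -dm mulnC exprM ym expr1n.
have [i yE] := prim_rootP prim_z yN.
have d_i : (d %| i)%N.
  by rewrite -(dvdn_pmul2r m_gt0) dm (prim_order_dvd prim_z) exprM -yE ym.
by exists (z ^+ (i %/ d)); rewrite -exprM divnK // yE.
Qed.

(* 9 divides 4^n - 1 when 3 divides n, since 4^3 = 1 modulo 9. *)
Lemma dvdn9_exp4_sub1 (n : nat) : (3 %| n)%N -> (9 %| 4 ^ n - 1)%N.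
Proof.
case/dvdnP=> k ->; rewrite -eqn_mod_dvd ?expn_gt0 // mulnC expnM -modnXm.
by rewrite [(4 ^ 3 %% 9)%N]/= exp1n.
Qed.

Lemma exp4_iter (R : comNzRingType) (c w : R) :
  c ^+ 3 = 1 -> w ^+ 4 = c * w -> forall k, w ^+ (4 ^ k) = c ^+ k * w.
Proof.
move=> c3 w4; elim=> [|k IH]; first by rewrite expn0 expr1 mul1r.
have c4 : c ^+ 4 = c by rewrite exprSr c3 mul1r.
by rewrite expnSr exprM IH exprMn w4 -exprM mulnC exprM c4 mulrA -exprSr.
Qed.

Section CharacteristicTwo.

Variable K : fieldType.
Hypothesis pchar2 : 2%N \in [pchar K].

Lemma addr_eq0_pchar2 (x y : K) : (x + y == 0) = (x == y).
Proof. by rewrite addr_eq0 oppr_pchar2. Qed.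

Lemma sqrD_pchar2 (x y : K) : (x + y) ^+ 2 = x ^+ 2 + y ^+ 2.
Proof. by rewrite sqrrD mulr2n addrr_pchar2 // addr0. Qed.

Lemma exp4D_pchar2 (x y : K) : (x + y) ^+ 4 = x ^+ 4 + y ^+ 4.
Proof. by rewrite -[4%N]/(2 * 2)%N !exprM !sqrD_pchar2. Qed.

Lemma linearized_additive (c x y : K) :
  (x + y) ^+ 4 + c * (x + y) = (x ^+ 4 + c * x) + (y ^+ 4 + c * y).
Proof. by rewrite exp4D_pchar2 mulrDr addrACA. Qed.

Lemma linearized_root (c w : K) :
  w != 0 -> (w ^+ 4 + c * w == 0) = (w ^+ 3 == c).
Proof.
by move=> w0; rewrite exprSr -mulrDl mulf_eq0 (negbTE w0) orbF addr_eq0_pchar2.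
Qed.

(* The derivative of the cube map in direction a is a x^2 + a^2 x + a^3, so
   two of its values agree exactly when a (x + y) (x + y + a) = 0; the ring
   identity below holds up to a multiple of 2, which vanishes here. *)
Lemma cube_pairwise_fibres : pairwise_fibres (fun x : K => x ^+ 3).
Proof.
move=> a x y a0 /eqP; rewrite -addr_eq0_pchar2.
have -> : (x + a) ^+ 3 + x ^+ 3 + ((y + a) ^+ 3 + y ^+ 3)
    = a * ((x + y) * (x + y + a)) + 2%:R * (x ^+ 3 + y ^+ 3 + a * x ^+ 2
        + a * y ^+ 2 - a * x * y + a ^+ 2 * x + a ^+ 2 * y + a ^+ 3).
  by ring.
rewrite (pcharf0 pchar2) mul0r addr0.
rewrite !mulf_eq0 (negbTE a0) /= -addrA !addr_eq0_pchar2.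
by case/orP => /eqP; [left | right].
Qed.

End CharacteristicTwo.

Section FieldOfOrderPowerOfFour.

Variables (n : nat) (K : finFieldType) (c : K).
Hypotheses (hK : #|K| = (4 ^ n)%N) (hc : c ^+ 2 + c + 1 = 0).

(* A field of order 4^n = 2^(2n) has characteristic 2 ... *)
Lemma pchar2_card : 2%N \in [pchar K].
Proof. by apply: (@card_finPcharP _ 2 (2 * n)) => //; rewrite hK expnM. Qed.

(* ... so 3 = 1 is invertible and c is a primitive cube root of unity. *)
Lemma c_prim_root : 3.-primitive_root c.
Proof.
apply: cube_root_unity hc.
by rewrite -[3%N]/(1 + 2)%N natrD (pcharf0 pchar2_card) addr0 oner_neq0.
Qed.

Lemma cube_root_c_iff : (exists2 w : K, w != 0 & w ^+ 3 = c) <-> (3 %| n)%N.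
Proof.
have c3 : c ^+ 3 = 1 := prim_expr_order c_prim_root.
split=> [[w w0 w3] | n3].
  have w4 : w ^+ 4 = c * w by rewrite exprSr w3.
  have : c ^+ n * w = 1 * w by rewrite -exp4_iter // -hK expf_card mul1r.
  by move/(mulIf w0)/eqP; rewrite -(prim_order_dvd c_prim_root).
have Kpred : #|K|.-1 = (4 ^ n - 1)%N by rewrite hK subn1.
have [m m_def] : exists m, (3 * m)%N = #|K|.-1.
  exists ((4 ^ n - 1) %/ 3)%N; rewrite Kpred mulnC divnK //.
  exact: dvdn_trans _ (dvdn9_exp4_sub1 n3).
have cm : c ^+ m = 1.
  apply/eqP; rewrite -(prim_order_dvd c_prim_root) -(@dvdn_pmul2l 3) //.
  by rewrite m_def Kpred dvdn9_exp4_sub1.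
have [w w3] := finField_power_of_unit_root m_def cm.
exists w => //; apply: contra_eq_neq w3 => ->.
by rewrite expr0n eq_sym (prim_root_eq0 c_prim_root).
Qed.

(* Hence the linearized polynomial L x = x^4 + c x is injective iff 3 does
   not divide n: its kernel consists of 0 and the cube roots of c. *)
Lemma linearized_injective_iff :
  injective (fun x : K => x ^+ 4 + c * x) <-> ~~ (3 %| n)%N.
Proof.
have L0 : 0 ^+ 4 + c * 0 = 0 :> K by rewrite expr0n mulr0 addr0.
split=> [L_inj | n3 x y /= Lxy].
  apply/negP => /cube_root_c_iff [w w0 /eqP w3].
  have /eqP Lw : w ^+ 4 + c * w == 0 by rewrite linearized_root // pchar2_card.
  by move: w0; rewrite (L_inj w 0) ?eqxx //= Lw L0.
apply/eqP; rewrite -(addr_eq0_pchar2 pchar2_card); apply: contraNT n3 => xy0.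
apply/cube_root_c_iff; exists (x + y) => //; apply/eqP.
rewrite -(linearized_root pchar2_card) // (linearized_additive pchar2_card).
by rewrite Lxy addrr_pchar2 // pchar2_card.
Qed.

End FieldOfOrderPowerOfFour.

Theorem mainTheorem6 (n : nat) (K : finFieldType) (hK : #|K| = (4 ^ n)%N)
    (c : K) (hc : c ^+ 2 + c + 1 = 0) :
  (bijective (fun x : K => x ^+ 4 + c * x) <-> ~~ (3 %| n)%N) /\
  ((0 < n)%N -> ~~ (3 %| n)%N -> APN (fun x : K => x ^+ 12 + c * x ^+ 3)).
Proof.
have pchar2 := pchar2_card hK.
have L_inj_iff := linearized_injective_iff hK hc.
split.
  split=> [/bij_inj /L_inj_iff // | /L_inj_iff]; exact: injF_bij.
move=> _ /L_inj_iff L_inj; apply: pairwise_fibres_APN.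
apply: (pairwise_fibres_comp (linearized_additive pchar2 c) L_inj _
  (cube_pairwise_fibres pchar2)).
by move=> x; rewrite -exprM.
Qed.
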